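(* Let $c\in\Sigma$ and let $T[k,l]$ ($k\le l$) be a string such that $T[k,l-1]$ is right-maximal and $T[l]=c$ (i.e. $T[k,l]$ is a $c$-right-extension of the right-maximal string $T[k,l-1]$). Then there exist a $c$-run break $i$ and $i'\in\{i-1,i\}$ with $\mathrm{BWT}_r[i']=c$ such that $T[k,l]$ is a suffix of $T[\mathrm{text}(i')-\mathrm{LCP}_r[i],\,\mathrm{text}(i')]$.
   Context: Let $T=T[1,n]\in\Sigma^n$, $n\ge2$, over $\Sigma=\{1,\dots,\sigma\}$, with $T[1]=\$$ the smallest character, occurring only at position 1, and every character of $\Sigma$ occurring in $T$. $T[i,j]=T[i]\cdots T[j]$ (empty if $i>j$). A substring $T[i,j]$ ($i-1\le j$) is right-maximal if it is a suffix of $T$ or there exist distinct $a,b\in\Sigma$ with both $T[i,j]a$ and $T[i,j]b$ occurring in $T$. Let $\overleftarrow T=T[n]\cdots T[1]$; $\mathrm{SA}_r$ is the suffix array of $\overleftarrow T$; $\mathrm{LCP}_r[1]=0$ and for $i\ge2$, $\mathrm{LCP}_r[i]$ is the length of the longest common prefix of the suffixes of $\overleftarrow T$ starting at $\mathrm{SA}_r[i-1]$ and $\mathrm{SA}_r[i]$; $\mathrm{BWT}_r[i]=\overleftarrow T[\mathrm{SA}_r[i]-1]$ if $\mathrm{SA}_r[i]>1$, else $\overleftarrow T[n]$. $\mathrm{text}(i)=n-\mathrm{SA}_r[i]+1$. For $i\in[2,n]$ and $c\in\Sigma$, $i$ is a $c$-run break if $\mathrm{BWT}_r[i-1]\neq\mathrm{BWT}_r[i]$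 and $c\in\{\mathrm{BWT}_r[i-1],\mathrm{BWT}_r[i]\}$. *)

(* Strings are [seq nat] over Sigma = {1,...,sigma};
   positions are 1-indexed as in the paper. *)
From mathcomp Require Import all_boot.
Set Implicit Arguments. Unset Strict Implicit. Unset Printing Implicit Defensive.

Definition chr (T : seq nat) (j : nat) : nat := nth 0 T j.-1.

(* T[i,j] = T[i] ... T[j]  (empty if i > j); intended for i >= 1 *)
Definition substr (T : seq nat) (i j : nat) : seq nat := drop i.-1 (take j T).

Fixpoint lexle (s t : seq nat) : bool :=
  match s, t with
  | [::], _ => true
  | _ :: _, [::] => false
  | a :: s', b :: t' => (a < b) || ((a == b) && lexle s' t')
  end.

Fixpoint lcp (s t : seq nat) : nat :=
  match s, t with
  | a :: s', b :: t' => if a == b then (lcp s' t').+1 else 0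
  | _, _ => 0
  end.

Definition Trev (T : seq nat) : seq nat := rev T.

Definition rsuf (T : seq nat) (p : nat) : seq nat := drop p.-1 (Trev T).

Definition SAr_list (T : seq nat) : seq nat :=
  sort (fun p q => lexle (rsuf T p) (rsuf T q)) (iota 1 (size T)).

Definition SAr (T : seq nat) (i : nat) : nat := nth 0 (SAr_list T) i.-1.

Definition LCPr (T : seq nat) (i : nat) : nat :=
  if i <= 1 then 0 else lcp (rsuf T (SAr T i.-1)) (rsuf T (SAr T i)).

Definition BWTr (T : seq nat) (i : nat) : nat :=
  if 1 < SAr T i then chr (Trev T) (SAr T i).-1
  else chr (Trev T) (size T).

Definition text (T : seq nat) (i : nat) : nat := size T - SAr T i + 1.

Definition right_maximal (sigma : nat) (T u : seq nat) : Prop :=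
  suffix u T \/
  exists a b, [/\ 1 <= a <= sigma, 1 <= b <= sigma, a != b,
                  infix (rcons u a) T & infix (rcons u b) T].

Definition run_break (T : seq nat) (c i : nat) : Prop :=
  [/\ 2 <= i <= size T, BWTr T i.-1 != BWTr T i &
      (c == BWTr T i.-1) || (c == BWTr T i)].

Definition valid_text (sigma : nat) (T : seq nat) : Prop :=
  [/\ 2 <= size T,
      (forall j, 1 <= j <= size T -> 1 <= chr T j <= sigma),
      chr T 1 = 1,
      (forall j, 2 <= j <= size T -> chr T j != 1) &
      (forall a, 1 <= a <= sigma -> a \in T)].

(* Row i of the BWT of the reversed text stands for the prefix T[1, text(i)]
   of T, and the rows whose prefix ends with u = T[k, l-1] form an interval of
   SA_r, because they are exactly the suffixes of rev T starting with rev u.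
   Every row of that interval has LCP_r at least |u| with its predecessor, and
   row i carries BWT_r[i] = T[text(i) + 1], the letter following that
   occurrence of u.  The occurrence of u at k..l-1 gives a row with BWT_r = c;
   right-maximality gives a row with another letter (or with $, when u is a
   suffix of T).  Between those two rows the BWT_r must switch from c to a
   different letter, which is a c-run break i whose rows i-1 and i both end
   with u. *)
From mathcomp Require Import all_boot zify.

Set Implicit Arguments.
Unset Strict Implicit.
Unset Printing Implicit Defensive.

Lemma lexle_refl s : lexle s s.
Proof. by elim: s => //= a s ->; rewrite eqxx orbT. Qed.

Lemma lexle_trans s t r : lexle s t -> lexle t r -> lexle s r.
Proof.
elim: s t r => [//|a s IH] [|b t] [|c r] //=.
case/orP=> [ab|/andP[/eqP<- st]]; case/orP=> [bc|/andP[/eqP<- tr]].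
- by rewrite (ltn_trans ab bc).
- by rewrite ab.
- by rewrite bc.
- by rewrite eqxx (IH _ _ st tr) orbT.
Qed.

Lemma lexle_total s t : lexle s t || lexle t s.
Proof.
elim: s t => [//|a s IH] [|b t] //=.
by case: (ltngtP a b) => //= ->; rewrite eqxx /= IH.
Qed.

Lemma prefix_lexle_between w s t r :
  prefix w s -> prefix w r -> lexle s t -> lexle t r -> prefix w t.
Proof.
elim: w s t r => [|h w IH] [|a s] [|b t] [|c r] //=; rewrite ?prefix0s ?prefix_cons //.
case/andP=> /eqP<- ps /andP[/eqP<- pr].
case/orP=> [hb|/andP[/eqP<- st]]; case/orP=> [bh|/andP[/eqP bh tr]].
- by move: (ltn_trans hb bh); rewrite ltnn.
- by move: hb; rewrite bh ltnn.
- by move: bh; rewrite ltnn.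
- by rewrite eqxx (IH _ _ _ ps pr st tr).
Qed.

Lemma prefix_size_lcp w s t : prefix w s -> prefix w t -> size w <= lcp s t.
Proof.
elim: w s t => [|h w IH] [|a s] [|b t] //=; rewrite ?prefix_cons //.
case/andP=> /eqP<- ps /andP[/eqP<- pt]; rewrite eqxx ltnS; exact: IH.
Qed.

Lemma change_point (T : eqType) (f : nat -> T) m n :
  m <= n -> f m != f n -> exists i, m < i <= n /\ f i.-1 != f i.
Proof.
move=> /subnKC <-; move: (n - m) => d; elim: d m => [|d IH] m; first by rewrite addn0 eqxx.
case: (eqVneq (f m) (f m.+1)) => [fm|fm _].
- rewrite fm addnS -addSn => /(IH m.+1)[i [hi fi]].
  by exists i; split=> //; lia.
- by exists m.+1; split=> //; lia.
Qed.

Lemma suffix_drop_leq (u s : seq nat) j :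
  suffix u s -> j <= size s - size u -> suffix u (drop j s).
Proof.
case/suffixP=> s' -> hj; apply/suffixP; exists (drop j s').
rewrite size_cat addnK in hj; rewrite drop_cat; case: ltnP => // h.
have -> : j = size s' by apply/eqP; rewrite eqn_leq hj.
by rewrite subnn drop0 drop_size.
Qed.

Lemma infix_substr T i j : infix (substr T i j) T.
Proof. exact: suffix_infix_trans (suffix_drop _ _) (prefixW (prefix_take _ _)). Qed.

Lemma substr_rcons T k l : 1 <= k <= l -> l <= size T ->
  substr T k l = rcons (substr T k l.-1) (chr T l).
Proof.
move=> hkl hl; rewrite /substr -{1}(@ltn_predK 0 l) ?(take_nth 0); try lia.
by rewrite drop_rcons // size_takel; lia.
Qed.

Section SuffixArrayRows.

Variable T : seq nat.
Local Notation n := (size T).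

Lemma perm_SAr_list : perm_eq (SAr_list T) (iota 1 n).
Proof. by rewrite /SAr_list perm_sort perm_refl. Qed.

Lemma size_SAr_list : size (SAr_list T) = n.
Proof. by rewrite (perm_size perm_SAr_list) size_iota. Qed.

Lemma SAr_range i : 1 <= i <= n -> 1 <= SAr T i <= n.
Proof.
move=> hi; have: SAr T i \in SAr_list T.
  by rewrite /SAr; apply: mem_nth; rewrite size_SAr_list; lia.
by rewrite (perm_mem perm_SAr_list) mem_iota; lia.
Qed.

Lemma text_range i : 1 <= i <= n -> 1 <= text T i <= n.
Proof. by move/SAr_range; rewrite /text; lia. Qed.

Lemma text_onto t : 1 <= t <= n -> exists2 i, 1 <= i <= n & text T i = t.
Proof.
move=> ht; set p := n - t + 1.
have hp : p \in SAr_list T by rewrite (perm_mem perm_SAr_list) mem_iota; lia.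
exists (index p (SAr_list T)).+1; first by move: hp; rewrite -index_mem size_SAr_list.
by rewrite /text /SAr /= nth_index //; lia.
Qed.

Lemma rsuf_SAr i : 1 <= i <= n -> rsuf T (SAr T i) = rev (take (text T i) T).
Proof.
by move/SAr_range=> h; rewrite /rsuf /Trev drop_rev /text; congr (rev (take _ _)); lia.
Qed.

Lemma BWTr_text i : 1 <= i <= n ->
  BWTr T i = if text T i < n then chr T (text T i).+1 else chr T 1.
Proof.
move/SAr_range=> h; rewrite /BWTr /text /chr /Trev.
by case: ltnP => hp; [rewrite ifT | rewrite ifF]; rewrite ?nth_rev; try congr nth; lia.
Qed.

Lemma lexle_rsuf_SAr i j : 1 <= i <= j -> j <= n ->
  lexle (rsuf T (SAr T i)) (rsuf T (SAr T j)).
Proof.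
move=> hij hj; pose R p q := lexle (rsuf T p) (rsuf T q).
have R_sorted : sorted R (SAr_list T).
  by apply: sort_sorted => p q; apply: lexle_total.
have := sorted_leq_nth (fun _ _ _ => @lexle_trans _ _ _) (fun _ => lexle_refl _) 0 R_sorted.
by move=> /(_ i.-1 j.-1); rewrite !inE size_SAr_list; apply; lia.
Qed.

Definition row_suffix (u : seq nat) (i : nat) : bool := suffix u (take (text T i) T).

Lemma row_suffixE u i : 1 <= i <= n ->
  row_suffix u i = prefix (rev u) (rsuf T (SAr T i)).
Proof. by move=> hi; rewrite rsuf_SAr // prefix_rev. Qed.

Lemma row_suffix_between u lo hi i : row_suffix u lo -> row_suffix u hi ->
  1 <= lo <= i -> i <= hi <= n -> row_suffix u i.
Proof.
move=> + + hlo hhi; rewrite !row_suffixE; try lia.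
by move=> Plo Phi; apply: prefix_lexle_between Plo Phi _ _; apply: lexle_rsuf_SAr; lia.
Qed.

Lemma LCPr_row_suffix u i : 2 <= i <= n ->
  row_suffix u i.-1 -> row_suffix u i -> size u <= LCPr T i.
Proof.
move=> hi; rewrite /LCPr ifF -?(size_rev u) ?row_suffixE; try lia.
exact: prefix_size_lcp.
Qed.

Lemma row_of_occurrence u x : infix (rcons u x) T ->
  exists i, [/\ 1 <= i <= n, row_suffix u i & BWTr T i = x].
Proof.
case/infixP=> s1 [s2 eT0].
have eT : T = (s1 ++ u) ++ x :: s2 by rewrite eT0 -cats1 -!catA.
have hn : size s1 + size u < n by rewrite eT !size_cat /=; lia.
case: (posnP (size s1 + size u)) => [/eqP|] ht.
- have [i hi hit] := @text_onto n ltac:(lia).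
  move: ht; rewrite addn_eq0 !size_eq0 => /andP[/eqP s10 /eqP u0].
  exists i; split; rewrite // ?/row_suffix ?u0 ?suffix0s // BWTr_text // hit ltnn.
  by rewrite /chr eT s10 u0.
- have [i hi hit] := @text_onto (size s1 + size u) ltac:(lia).
  exists i; split=> //.
    by rewrite /row_suffix hit eT -size_cat take_size_cat // suffix_suffix.
  by rewrite BWTr_text // hit hn /chr /= eT nth_cat size_cat ltnn subnn.
Qed.

Lemma row_of_suffix u : 0 < n -> suffix u T ->
  exists i, [/\ 1 <= i <= n, row_suffix u i & BWTr T i = chr T 1].
Proof.
move=> hn hu; have [i hi hit] := @text_onto n ltac:(lia).
by exists i; split; rewrite // ?/row_suffix ?hit ?take_size // BWTr_text // hit ltnn.
Qed.

Lemma run_break_between u c p q : 1 <= p <= n -> 1 <= q <= n ->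
  row_suffix u p -> row_suffix u q -> BWTr T p = c -> BWTr T q != c ->
  exists i, [/\ run_break T c i, row_suffix u i.-1 & row_suffix u i].
Proof.
pose g i := BWTr T i == c.
suff: forall lo hi, 1 <= lo <= hi -> hi <= n ->
    row_suffix u lo -> row_suffix u hi -> g lo != g hi ->
    exists i, [/\ run_break T c i, row_suffix u i.-1 & row_suffix u i].
  move=> between hp hq Pp Pq Bp Bq; have gpq : g p != g q by rewrite /g Bp eqxx (negbTE Bq).
  case: (leqP p q) => h; [apply: (between p q) | apply: (between q p)];
    rewrite // 1?eq_sym //; lia.
move=> lo hi hlo hhi Plo Phi; have lohi : lo <= hi by lia.
case/(change_point lohi)=> i [hi' gi].
have Pmid j : lo <= j <= hi -> row_suffix u j.
  by move=> hj; apply: (row_suffix_between Plo Phi); lia.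
exists i; split; rewrite ?Pmid //; try lia.
split; first lia.
  by move: gi; rewrite /g; apply: contra => /eqP ->.
by move: gi; rewrite /g !(eq_sym c); case: (BWTr T i.-1 == c); case: (BWTr T i == c).
Qed.

Lemma suffix_window u j L : 1 <= j <= n -> row_suffix u j -> size u <= L ->
  suffix (rcons u (BWTr T j))
         (rcons (substr T (text T j - L + 1) (text T j)) (BWTr T j)).
Proof.
move=> hj Pj hL; rewrite suffix_rcons eqxx addn1 /substr /=.
have ht := text_range hj; apply: suffix_drop_leq Pj _.
by rewrite size_takel; lia.
Qed.

End SuffixArrayRows.

Lemma row_of_other_extension sigma T u c : valid_text sigma T ->
  right_maximal sigma T u -> (c = 1 -> u = [::]) ->
  exists q, [/\ 1 <= q <= size T, row_suffix T u q & BWTr T q != c].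
Proof.
case=> hn _ T1 Tne1 _ hrm hc.
case: (eqVneq c 1) => [c1|cn1].
  have [|q [hq Pq Bq]] := @row_of_occurrence T [::] (chr T (size T)).
    by rewrite infix1s /chr mem_nth // ltn_predL ltnW.
  by exists q; split; rewrite ?hc // Bq c1 Tne1 //; lia.
case: hrm => [suf|[a [b [_ _ ab ha hb]]]].
  have [q [hq Pq Bq]] := row_of_suffix (ltac:(lia) : 0 < size T) suf.
  by exists q; split; rewrite // Bq T1 eq_sym.
have [x xc hx] : exists2 x, x != c & infix (rcons u x) T.
  by case: (eqVneq a c) => [ac|]; [exists b; rewrite // -ac eq_sym | exists a].
have [q [hq Pq Bq]] := row_of_occurrence hx.
by exists q; split; rewrite ?Bq.
Qed.

Theorem mainTheorem4 (sigma : nat) (T : seq nat) :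
  valid_text sigma T ->
  forall (c k l : nat),
    1 <= c <= sigma ->
    1 <= k <= l -> l <= size T ->
    right_maximal sigma T (substr T k l.-1) ->
    chr T l = c ->
    exists i i' : nat,
      [/\ run_break T c i,
          i' = i.-1 \/ i' = i,
          BWTr T i' = c &
          suffix (substr T k l)
                 (rcons (substr T (text T i' - LCPr T i + 1) (text T i'))
                        (BWTr T i'))].
Proof.
move=> HT c k l _ hkl hl hrm Tl; have [_ _ _ Tne1 _] := HT.
have Ekl := substr_rcons hkl hl; rewrite Tl in Ekl.
set u := substr T k l.-1 in hrm Ekl *.
have u0 : c = 1 -> u = [::].
  move=> c1; rewrite /u; suff -> : l = 1 by rewrite /substr take0.
  case: (leqP l 1) => [|l_gt1]; first lia.
  by have := Tne1 l; rewrite l_gt1 hl Tl c1 eqxx => /(_ isT).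
have occ : infix (rcons u c) T by rewrite -Ekl infix_substr.
have [p [hp Pp Bp]] := row_of_occurrence occ.
have [q [hq Pq Bq]] := row_of_other_extension HT hrm u0.
have [i [hbr Pi1 Pi]] := run_break_between hp hq Pp Pq Bp Bq.
have [/andP[hi hin] _ _] := hbr.
have hL := LCPr_row_suffix (ltac:(lia) : 2 <= i <= size T) Pi1 Pi.
rewrite Ekl; case: (eqVneq (BWTr T i.-1) c) => [Bi1|Bi1].
- exists i, i.-1; split; [by [] | by left | by [] |].
  by rewrite -{1}Bi1; apply: suffix_window => //; lia.
- have Bi : BWTr T i = c by case: hbr => _ _; rewrite eq_sym (negbTE Bi1) => /eqP.
  exists i, i; split; [by [] | by right | by [] |].
  by rewrite -{1}Bi; apply: suffix_window => //; lia.
Qed.
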